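(* Let $\kappa$ be a regular uncountable cardinal and $I$ an ideal on $\kappa$. Then $I$ is pleasant if and only if $I$ is densely pleasant, i.e. for every $A\in I^+$ there is $B\in (I\restriction A)^+$ such that $I\restriction B$ is pleasant.
   Context: An ideal on $\kappa$ is a family of subsets of $\kappa$ closed under subsets and finite unions, which is $<\kappa$-complete and contains all singletons. $I^+=\{X\subseteq\kappa: X\notin I\}$, and for $A\in I^+$, $I\restriction A=\{X\subseteq\kappa: X\cap A\in I\}$. For $A\subseteq\kappa$ and $X_\alpha\subseteq\kappa$, $\bigtriangledown_{\alpha\in A}X_\alpha=\{\xi<\kappa:\exists\alpha<\xi\,(\alpha\in A\wedge \xi\in X_\alpha)\}$. $I$ is pleasant if whenever $A\in I$ and $X_\alpha\in I$ for all $\alpha$, then $\bigtriangledown_{\alpha\in A}X_\alpha\in I$. *)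

(* ordinals/cardinals modelled abstractly.
   kappa is represented by a type K with a strict well-order lt;
   subsets of kappa are predicates K -> Prop; a family of subsets
   (e.g. an ideal) is a predicate (K -> Prop) -> Prop. *)
From Stdlib Require Import Relations Wellfounded.

Set Implicit Arguments.

Section Card.
Variables (K : Type) (lt : K -> K -> Prop).

(* |J| < kappa  (with kappa = |K|): there is no injection K -> J *)
Definition card_lt_kappa (J : Type) : Prop :=
  ~ exists f : K -> J, forall x y, f x = f y -> x = y.

Definition strict_well_order : Prop :=
  well_founded lt /\
  (forall x, ~ lt x x) /\
  (forall x y z, lt x y -> lt y z -> lt x z) /\
  (forall x y, lt x y \/ x = y \/ lt y x).

Definition is_cardinal : Prop :=
  forall a : K, card_lt_kappa {b : K | lt b a}.

Definition is_regular : Prop :=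
  forall X : K -> Prop, card_lt_kappa {x : K | X x} ->
    exists b : K, forall x, X x -> lt x b.

Definition is_uncountable : Prop :=
  ~ exists f : K -> nat, forall x y, f x = f y -> x = y.

Definition regular_uncountable_cardinal : Prop :=
  strict_well_order /\ is_cardinal /\ is_regular /\ is_uncountable.

Definition is_ideal (I : (K -> Prop) -> Prop) : Prop :=
  (forall X Y : K -> Prop, I X -> (forall x, Y x -> X x) -> I Y) /\
  (forall X Y : K -> Prop, I X -> I Y -> I (fun x => X x \/ Y x)) /\
  (forall (J : Type) (F : J -> K -> Prop), card_lt_kappa J ->
     (forall j, I (F j)) -> I (fun x => exists j, F j x)) /\
  (forall a : K, I (fun x => x = a)).

Definition positive (I : (K -> Prop) -> Prop) (X : K -> Prop) : Prop := ~ I X.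

Definition restrict (I : (K -> Prop) -> Prop) (A : K -> Prop) : (K -> Prop) -> Prop :=
  fun X => I (fun x => X x /\ A x).

Definition diag_union (A : K -> Prop) (X : K -> K -> Prop) : K -> Prop :=
  fun xi => exists a, lt a xi /\ A a /\ X a xi.

Definition pleasant (I : (K -> Prop) -> Prop) : Prop :=
  forall (A : K -> Prop) (X : K -> K -> Prop),
    I A -> (forall a, I (X a)) -> I (diag_union A X).

Definition densely_pleasant (I : (K -> Prop) -> Prop) : Prop :=
  forall A : K -> Prop, positive I A ->
    exists B : K -> Prop, positive (restrict I A) B /\ pleasant (restrict I B).

End Card.

From Stdlib Require Import Classical.

(* A pleasant ideal is densely
   pleasant with the witness B = kappa, since I restricted to kappa is I.
   Conversely, if some diagonal union D of sets in I were I-positive, dense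
   pleasantness would give B with D ∩ B ∉ I and I restricted to B pleasant;
   but every set in I is null for I restricted to B, so D is null there too,
   i.e. D ∩ B ∈ I. *)

Section Pleasant.

Variables (K : Type) (lt : K -> K -> Prop) (I : (K -> Prop) -> Prop).

Hypothesis I_subset : forall X Y : K -> Prop,
  I X -> (forall x, Y x -> X x) -> I Y.

Let setT : K -> Prop := fun _ => True.

Lemma restrict_setT X : restrict I setT X <-> I X.
Proof.
  unfold restrict, setT; split; intro HX; apply (I_subset _ _ HX); firstorder.
Qed.

Lemma restrict_of_ideal B X : I X -> restrict I B X.
Proof.
  intro HX; apply (I_subset _ _ HX); intros x [Hx _]; exact Hx.
Qed.

Lemma positive_restrict_setT A :
  positive I A -> positive (restrict I A) setT.
Proof.
  intros HA HT; apply HA, (I_subset _ _ HT); unfold setT; tauto.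
Qed.

Lemma pleasant_restrict_setT :
  pleasant lt I -> pleasant lt (restrict I setT).
Proof.
  intros Hp A X HA HX.
  apply restrict_setT, Hp.
  - exact (proj1 (restrict_setT A) HA).
  - intro a; exact (proj1 (restrict_setT (X a)) (HX a)).
Qed.

Lemma densely_pleasant_of_pleasant :
  pleasant lt I -> densely_pleasant lt I.
Proof.
  intros Hp A HA; exists setT; split.
  - exact (positive_restrict_setT _ HA).
  - exact (pleasant_restrict_setT Hp).
Qed.

Lemma pleasant_of_densely_pleasant :
  densely_pleasant lt I -> pleasant lt I.
Proof.
  intros Hd A X HA HX; apply NNPP; intro Hpos.
  destruct (Hd _ Hpos) as [B [HB HpB]].
  assert (Hnull : restrict I B (diag_union lt A X)).
  { apply HpB.
    - exact (restrict_of_ideal B _ HA).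
    - intro a; exact (restrict_of_ideal B _ (HX a)). }
  apply HB, (I_subset _ _ Hnull); tauto.
Qed.

End Pleasant.

Theorem proposition2p6 (K : Type) (lt : K -> K -> Prop)
  (I : (K -> Prop) -> Prop) :
  regular_uncountable_cardinal lt ->
  is_ideal I ->
  (pleasant lt I <-> densely_pleasant lt I).
Proof.
  intros _ [I_subset _]; split.
  - exact (densely_pleasant_of_pleasant K lt I I_subset).
  - exact (pleasant_of_densely_pleasant K lt I I_subset).
Qed.
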